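(* Let $\mathcal E$ be an exchangeability system for a noncommutative probability space $(\mathcal A,\phi)$ and let $\mathcal B,\mathcal C\subseteq\mathcal A$ be subalgebras such that mixed cumulants vanish, i.e. for all $n$, all $X_1,\dots,X_n\in\mathcal B\cup\mathcal C$, every decomposition $[n]=I\sqcup J$ with $X_i\in\mathcal B$ for $i\in I$ and $X_j\in\mathcal C$ for $j\in J$, and every $\pi\in\Pi_n$ having a block that meets both $I$ and $J$, one has $K_\pi(X_1,\dots,X_n)=0$. Then $\mathcal B$ and $\mathcal C$ are $\mathcal E$-independent.
   Context: A noncommutative probability space is a pair $(\mathcal A,\phi)$ of a complex unital algebra $\mathcal A$ and a unital linear functional $\phi$. An exchangeability system $\mathcal E$ for $(\mathcal A,\phi)$ consists of a noncommutative probability space $(\mathcal U,\tilde\phi)$ and a family $(\iota_k)_{k\in\mathbb N}$ of embeddings (injective unital algebra homomorphisms) $\iota_k:\mathcal A\to\mathcal A_k\subseteq\mathcal U$ with $\tilde\phi\circ\iota_k=\phi$; write $X^{(k)}=\iota_k(X)$. It is required that for all $X_1,\dots,X_n\in\mathcal A$, all indices $i_1,\dots,i_n\in\mathbb N$ and every bijection $\sigma$ of $\mathbb N$, $\tilde\phi(X_1^{(i_1)}\cdots X_n^{(i_n)})=\tilde\phi(X_1^{(\sigma(i_1))}\cdots X_n^{(\sigma(i_n))})$; this value depends only on the kernel of $j\mapsto i_j$ and for a partition $\sigma$ of $[n]$ it is denoted $\phi_\sigma(X_1,\dots,X_n)$. $\Pi_n$ is the lattice of set partitions of $[n]$ ordered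 by refinement, with Möbius function $\mu$; $K_\pi(X_1,\dots,X_n)=\sum_{\sigma\le\pi}\phi_\sigma(X_1,\dots,X_n)\mu(\sigma,\pi)$. Subalgebras $\mathcal B,\mathcal C$ are $\mathcal E$-independent if for all $X_1,\dots,X_n\in\mathcal B\cup\mathcal C$ and every decomposition $[n]=I\sqcup J$ with $X_i\in\mathcal B$ for $i\in I$, $X_i\in\mathcal C$ for $i\in J$, one has $\phi_\pi(X_1,\dots,X_n)=\phi_{\pi'}(X_1,\dots,X_n)$ whenever $\pi,\pi'\in\Pi_n$ satisfy $\pi|_I=\pi'|_I$ and $\pi|_J=\pi'|_J$. *)

From HB Require Import structures.
From mathcomp Require Import all_boot all_order all_algebra.
From mathcomp Require Import complex.
From mathcomp Require Import reals.
Set Implicit Arguments. Unset Strict Implicit. Unset Printing Implicit Defensive.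
Import Order.TTheory GRing.Theory Num.Theory.
Local Open Scope ring_scope.

Section NCProb.
Variable R : realType.
Local Notation C := (complex R).

Definition unital_functional (A : algType C) (phi : A -> C) : Prop :=
  (forall (a : C) (x y : A), phi (a *: x + y) = a * phi x + phi y) /\ phi 1 = 1.

Definition embedding (A U : algType C) (f : A -> U) : Prop :=
  [/\ forall (a : C) (x y : A), f (a *: x + y) = a *: f x + f y,
      forall x y : A, f (x * y) = f x * f y,
      f 1 = 1
    & injective f].

Definition is_subalgebra (A : algType C) (B : {pred A}) : Prop :=
  [/\ 0 \in B,
      forall (a : C) x y, x \in B -> y \in B -> a *: x + y \in B
    & forall x y, x \in B -> y \in B -> x * y \in B].

Definition exchangeability_system (A U : algType C) (phi : A -> C)
    (phit : U -> C) (iota : nat -> A -> U) : Prop :=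
  [/\ unital_functional phit,
      forall k, embedding (iota k),
      forall k (x : A), phit (iota k x) = phi x
    & forall n (X : 'I_n -> A) (i : 'I_n -> nat) (s : nat -> nat),
        bijective s ->
        phit (\prod_(j < n) iota (i j) (X j)) =
        phit (\prod_(j < n) iota (s (i j)) (X j))].

End NCProb.

Definition is_part n (P : {set {set 'I_n}}) : bool := partition P [set: 'I_n].

Definition refines n (s p : {set {set 'I_n}}) : bool :=
  [forall B in s, exists D in p, B \subset D].

(* Moebius function of Pi_n, by the standard recursion
   mu(s,s) = 1, mu(s,p) = - sum_{s <= t < p} mu(s,t) for s < p, 0 otherwise;
   k is fuel (chains in Pi_n have length < n+1). *)
Fixpoint mobius_rec (k : nat) n (s p : {set {set 'I_n}}) : int :=
  match k with
  | 0 => (s == p)%:R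
  | k'.+1 =>
      if s == p then 1
      else if refines s p then
        - \sum_(t : {set {set 'I_n}} | [&& is_part t, refines s t,
                                          refines t p & t != p])
            mobius_rec k' s t
      else 0
  end.

Definition mobius n (s p : {set {set 'I_n}}) : int := mobius_rec n.+1 s p.

(* block index function j |-> index of the block of s containing j;
   its kernel is the partition s *)
Definition block_index n (s : {set {set 'I_n}}) (j : 'I_n) : nat :=
  index (pblock s j) (enum s).

Definition restr n (p : {set {set 'I_n}}) (I : {set 'I_n}) : {set {set 'I_n}} :=
  [set B :&: I | B in p] :\ set0.

Section Cumulants.
Variable R : realType.
Local Notation C := (complex R).
Variables (A U : algType C) (phit : U -> C) (iota : nat -> A -> U).

(* phi_sigma(X_1..X_n) = phit(X_1^(i_1) ... X_n^(i_n)) with ker i = sigma *)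
Definition phi_part n (s : {set {set 'I_n}}) (X : 'I_n -> A) : C :=
  phit (\prod_(j < n) iota (block_index s j) (X j)).

Definition cumulant n (p : {set {set 'I_n}}) (X : 'I_n -> A) : C :=
  \sum_(s : {set {set 'I_n}} | is_part s && refines s p)
     phi_part s X * (mobius s p)%:~R.

Definition E_independent (B D : {pred A}) : Prop :=
  forall n (X : 'I_n -> A) (I : {set 'I_n}),
    (forall i, i \in I -> X i \in B) ->
    (forall i, i \notin I -> X i \in D) ->
    forall p p' : {set {set 'I_n}}, is_part p -> is_part p' ->
      restr p I = restr p' I -> restr p (~: I) = restr p' (~: I) ->
      phi_part p X = phi_part p' X.

Definition mixed_cumulants_vanish (B D : {pred A}) : Prop :=
  forall n (X : 'I_n -> A) (I : {set 'I_n}),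
    (forall i, i \in I -> X i \in B) ->
    (forall i, i \notin I -> X i \in D) ->
    forall p : {set {set 'I_n}}, is_part p ->
      (exists2 Bl, Bl \in p & (Bl :&: I != set0) && (Bl :&: ~: I != set0)) ->
      cumulant p X = 0.

End Cumulants.

From HB Require Import structures.
From mathcomp Require Import all_boot all_order all_algebra.
From mathcomp Require Import complex.
From mathcomp Require Import reals.
From mathcomp Require Import zify.
Set Implicit Arguments. Unset Strict Implicit. Unset Printing Implicit Defensive.
Import Order.TTheory GRing.Theory Num.Theory.

(* Moebius inversion on the refinement lattice gives the moment-cumulant
   formula phi_pi = sum_(sigma <= pi) K_sigma.  As mixed cumulants vanish, only
   partitions sigma none of whose blocks meets both I and its complement J
   contribute, and for such sigma the relation sigma <= pi depends only on the
   restrictions pi|_I and pi|_J. *)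

Section PartitionLattice.
Variable n : nat.
Implicit Types (s t p : {set {set 'I_n}}) (B D : {set 'I_n}).

Lemma is_part_cover s x : is_part s -> x \in cover s.
Proof. by case/and3P => /eqP -> _ _; rewrite inE. Qed.

Lemma is_part_trivIset s : is_part s -> trivIset s.
Proof. by case/and3P. Qed.

Lemma is_part_block_neq0 s B : is_part s -> B \in s -> B != set0.
Proof. by case/and3P => _ _ s0 sB; apply: contraNneq s0 => <-. Qed.

Lemma is_part_pblock_mem s x : is_part s -> pblock s x \in s.
Proof. by move=> ps; apply/pblock_mem/is_part_cover. Qed.

Lemma is_part_mem_pblock s x : is_part s -> x \in pblock s x.
Proof. by move=> ps; rewrite mem_pblock is_part_cover. Qed.

Lemma is_part_pblockE s : is_part s -> s = [set pblock s x | x : 'I_n].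
Proof.
move=> ps; apply/setP => B; apply/idP/imsetP => [sB | [x _ ->]].
  have /set0Pn [x xB] := is_part_block_neq0 ps sB.
  by exists x; rewrite ?(def_pblock (is_part_trivIset ps) sB xB).
exact: is_part_pblock_mem.
Qed.

Lemma refines_refl s : refines s s.
Proof. by apply/forall_inP => B sB; apply/exists_inP; exists B. Qed.

Lemma refines_trans t s p : refines s t -> refines t p -> refines s p.
Proof.
move=> /forall_inP st /forall_inP tp; apply/forall_inP => B /st /exists_inP [D tD BD].
have /exists_inP [E pE DE] := tp D tD.
by apply/exists_inP; exists E => //; apply: subset_trans DE.
Qed.

Lemma refinesP s p : is_part s -> is_part p ->
  reflect (forall x, pblock s x \subset pblock p x) (refines s p).
Proof.
move=> ps pp; apply: (iffP forall_inP) => [sp x | sp B sB].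
  have /exists_inP [D pD sD] := sp _ (is_part_pblock_mem x ps).
  have xD := subsetP sD x (is_part_mem_pblock x ps).
  by rewrite (def_pblock (is_part_trivIset pp) pD xD).
have /set0Pn [x xB] := is_part_block_neq0 ps sB.
apply/exists_inP; exists (pblock p x); first exact: is_part_pblock_mem.
by rewrite -(def_pblock (is_part_trivIset ps) sB xB).
Qed.

Lemma refines_anti s p : is_part s -> is_part p ->
  refines s p -> refines p s -> s = p.
Proof.
move=> ps pp /(refinesP ps pp) sp /(refinesP pp ps) ps'.
rewrite (is_part_pblockE ps) (is_part_pblockE pp).
by apply: eq_imset => x; apply/eqP; rewrite eqEsubset sp ps'.
Qed.

(* A strict coarsening merges blocks: the map sending a block of [s] to the
   block of [p] containing it is onto [p] but not injective. *)
Lemma refines_card_lt s p : is_part s -> is_part p -> refines s p -> s != p ->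
  #|p| < #|s|.
Proof.
move=> ps pp sp s_neq_p; have sp_x := refinesP ps pp sp.
pose up B := if [pick x in B] is Some x then pblock p x else set0.
have upE x : up (pblock s x) = pblock p x.
  rewrite /up; case: pickP => [y yx | /(_ x)]; last by rewrite is_part_mem_pblock.
  exact: same_pblock (is_part_trivIset pp) (subsetP (sp_x x) y yx).
have pE : p = up @: s.
  rewrite (is_part_pblockE ps) -imset_comp (is_part_pblockE pp).
  by apply: eq_imset => x /=; rewrite upE.
rewrite pE ltn_neqAle leq_imset_card andbT; apply: contra s_neq_p => /imset_injP up_inj.
apply/eqP/refines_anti => //; apply/refinesP => // x; apply/subsetP => y yx.
have ey : pblock s y = pblock s x.
  apply: up_inj; rewrite ?inE ?is_part_pblock_mem // !upE.
  exact: same_pblock (is_part_trivIset pp) yx.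
by rewrite -ey is_part_mem_pblock.
Qed.

Lemma refines_card_leq s p : is_part s -> is_part p -> refines s p -> #|p| <= #|s|.
Proof.
move=> ps pp sp; have [-> // | s_neq_p] := eqVneq s p.
exact/ltnW/refines_card_lt.
Qed.

Lemma is_part_card s : is_part s -> #|s| <= n.
Proof.
move=> ps; have := card_partition ps; rewrite cardsT card_ord => e.
rewrite [X in _ <= X]e -sum1_card.
by apply: leq_sum => B sB; rewrite card_gt0 (is_part_block_neq0 ps sB).
Qed.

(* Each recursive call replaces [p] by a strict refinement, which has more
   blocks, so fuel exceeding [#|s| - #|p|] is never exhausted. *)
Lemma mobius_rec_stable k s p : is_part s -> is_part p -> #|s| < #|p| + k ->
  mobius_rec k s p = mobius_rec k.+1 s p.
Proof.
elim: k p => [|k IHk] p ps pp lt_sp /=.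
  rewrite addn0 in lt_sp; have [eq_sp | _] := eqVneq s p.
    by rewrite eq_sp ltnn in lt_sp.
  by case: ifP => // sp; rewrite ltnNge (refines_card_leq ps pp sp) in lt_sp.
case: eqP => // _; case: ifP => // _; congr (- _)%R.
apply: eq_bigr => t /and4P [pt _ tp t_neq_p]; apply: IHk => //.
by have := refines_card_lt pt pp tp t_neq_p; move: lt_sp; rewrite addnS; lia.
Qed.

Local Open Scope ring_scope.

Lemma mobius_refl s : mobius s s = 1.
Proof. by rewrite /mobius /= eqxx. Qed.

Lemma mobius_recursion s p : is_part s -> is_part p -> refines s p -> s != p ->
  mobius s p = - \sum_(t | [&& is_part t, refines s t, refines t p & t != p])
                   mobius s t.
Proof.
move=> ps pp sp s_neq_p; rewrite /mobius /= (negbTE s_neq_p) sp; congr (- _).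
apply: eq_bigr => t /and4P [pt _ tp t_neq_p]; apply: mobius_rec_stable => //.
by have := is_part_card ps; have := refines_card_lt pt pp tp t_neq_p; lia.
Qed.

Lemma sum_mobius_interval s p : is_part s -> is_part p -> refines s p ->
  \sum_(t | [&& is_part t, refines s t & refines t p]) mobius s t = (s == p)%:R.
Proof.
move=> ps pp sp; rewrite (bigD1 p) /=; last by rewrite pp sp refines_refl.
have [<- | s_neq_p] := eqVneq s p.
  rewrite mobius_refl big1 ?addr0 // => t /andP [/and3P [pt st ts] t_neq_s].
  by rewrite (refines_anti pt ps ts st) eqxx in t_neq_s.
rewrite (eq_bigl (fun t => [&& is_part t, refines s t, refines t p & t != p])).
  by rewrite (mobius_recursion ps pp sp s_neq_p) addNr.
by move=> t; rewrite !andbA.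
Qed.

Lemma mobius_inversion (K : pzRingType) (F : {set {set 'I_n}} -> K) p :
  is_part p ->
  \sum_(s | is_part s && refines s p)
     \sum_(t | is_part t && refines t s) F t * (mobius t s)%:~R = F p.
Proof.
move=> pp; rewrite (exchange_big_dep (fun t => is_part t && refines t p)) /=; last first.
  by move=> s t /andP [_ sp] /andP [pt ts]; rewrite pt (refines_trans ts sp).
have inner t : is_part t -> refines t p ->
    \sum_(s | (is_part s && refines s p) && (is_part t && refines t s))
      F t * (mobius t s)%:~R = F t * (t == p)%:R.
  move=> pt tp; rewrite -mulr_sumr; congr (_ * _).
  have -> : (t == p)%:R = ((t == p)%:R : int)%:~R :> K by case: (t == p).
  rewrite -(sum_mobius_interval pt pp tp) mulrz_sumr.
  by apply: eq_bigl => s; rewrite pt /= andbAC -andbA.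
rewrite (bigD1 p) /=; last by rewrite pp refines_refl.
rewrite inner ?refines_refl // eqxx mulr1 big1 ?addr0 // => t /andP [/andP [pt tp] t_neq_p].
by rewrite inner // (negbTE t_neq_p) mulr0.
Qed.

End PartitionLattice.

Section NonmixedPartitions.
Variable n : nat.
Implicit Types (s p q : {set {set 'I_n}}) (I J B D : {set 'I_n}).

Definition nonmixed I s : bool := [forall B in s, (B \subset I) || (B \subset ~: I)].

Lemma restr_eq_subset_block p q J B D : restr p J = restr q J ->
  D \in p -> B \subset D -> B \subset J -> B != set0 ->
  exists2 D', D' \in q & B \subset D'.
Proof.
move=> eJ pD BD BJ B0; have BDJ : B \subset D :&: J by rewrite subsetI BD BJ.
have : D :&: J \in restr p J.
  rewrite !inE (imset_f (fun E => E :&: J) pD) andbT.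
  by apply: contra B0 => /eqP DJ0; rewrite -subset0 -DJ0.
rewrite eJ !inE => /andP [_ /imsetP [D' qD' DJ]].
by exists D' => //; apply: subset_trans BDJ _; rewrite DJ subsetIl.
Qed.

Lemma refines_restr_eq I s p q : is_part s -> nonmixed I s ->
  restr p I = restr q I -> restr p (~: I) = restr q (~: I) ->
  refines s p = refines s q.
Proof.
move=> ps /forall_inP nm.
suff sub p1 p2 : restr p1 I = restr p2 I -> restr p1 (~: I) = restr p2 (~: I) ->
    refines s p1 -> refines s p2.
  by move=> eI eJ; apply/idP/idP; apply: sub.
move=> eI eJ /forall_inP sp1; apply/forall_inP => B sB; apply/exists_inP.
have /exists_inP [D p1D BD] := sp1 B sB; have B0 := is_part_block_neq0 ps sB.
have [BI | BJ] := orP (nm B sB).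
  by have [D' ? ?] := restr_eq_subset_block eI p1D BD BI B0; exists D'.
by have [D' ? ?] := restr_eq_subset_block eJ p1D BD BJ B0; exists D'.
Qed.

End NonmixedPartitions.

Local Open Scope ring_scope.

Section MomentCumulant.
Variables (R : realType) (A U : algType (complex R)).
Variables (phit : U -> complex R) (iota : nat -> A -> U).

Lemma moment_cumulant n (X : 'I_n -> A) q : is_part q ->
  phi_part phit iota q X = \sum_(s | is_part s && refines s q) cumulant phit iota s X.
Proof. by move=> pq; rewrite (mobius_inversion (fun t => phi_part phit iota t X) pq). Qed.

Lemma moment_nonmixed_cumulant (B D : {pred A}) n (X : 'I_n -> A) (I : {set 'I_n}) q :
  mixed_cumulants_vanish phit iota B D ->
  (forall i, i \in I -> X i \in B) -> (forall i, i \notin I -> X i \in D) ->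
  is_part q ->
  phi_part phit iota q X =
    \sum_(s | is_part s && refines s q && nonmixed I s) cumulant phit iota s X.
Proof.
move=> mixed0 XB XD pq; rewrite moment_cumulant // (bigID (nonmixed I)) /=.
rewrite [X in _ + X]big1 ?addr0 // => s /andP [/andP [ps _]].
case/forall_inPn => Bl sBl; rewrite negb_or => /andP [BlI BlJ].
apply: (mixed0 _ X I XB XD s ps); exists Bl => //.
by rewrite -setDE setD_eq0 BlI setI_eq0 disjoints_subset BlJ.
Qed.

End MomentCumulant.

Theorem proposition2p10 (R : realType) (A U : algType (complex R))
    (phi : A -> complex R) (phit : U -> complex R) (iota : nat -> A -> U)
    (B D : {pred A}) :
  unital_functional phi ->
  exchangeability_system phi phit iota ->
  is_subalgebra B -> is_subalgebra D ->
  mixed_cumulants_vanish phit iota B D ->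
  E_independent phit iota B D.
Proof.
move=> _ _ _ _ mixed0 n X I XB XD p p' pp pp' eI eJ.
rewrite (moment_nonmixed_cumulant mixed0 XB XD pp).
rewrite (moment_nonmixed_cumulant mixed0 XB XD pp').
apply: eq_bigl => s; case ps: (is_part s) => //=.
by apply: andb_id2r => nm; apply: refines_restr_eq ps nm eI eJ.
Qed.
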